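(* Let $(X,Y)$ be a pair of continuous random variables with joint distribution function $H$, marginal distribution functions $F$ (of $X$) and $G$ (of $Y$), and copula $C$, so that $H(x,y)=C(F(x),G(y))$. For $p,q\in[0,1]$ define $$\lambda_{Y|X}(q|p)=\lim_{t\to 0^+} P\{G^{-1}((q-t)^+)<Y\le G^{-1}((q+t)^-)\mid F^{-1}((p-t)^+)<X\le F^{-1}((p+t)^-)\},$$ $$\lambda_{X|Y}(p|q)=\lim_{t\to 0^+} P\{F^{-1}((p-t)^+)<X\le F^{-1}((p+t)^-)\mid G^{-1}((q-t)^+)<Y\le G^{-1}((q+t)^-)\}.$$ Then for $p,q\in[0,1]$, $$\lambda_{Y|X}(q|p)=\lim_{t\to0^+}\frac{V_C([(p-t)^+,(p+t)^-]\times[(q-t)^+,(q+t)^-])}{(p+t)^- - (p-t)^+},\qquad \lambda_{X|Y}(p|q)=\lim_{t\to0^+}\frac{V_C([(p-t)^+,(p+t)^-]\times[(q-t)^+,(q+t)^-])}{(q+t)^- - (q-t)^+},$$ provided the limits exist.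
   Context: For real $a$, $a^+=\max(a,0)$ and $a^-=1-(1-a)^+$. For a distribution function $F$, $F^{-1}(u)=\inf\{x\in\mathbb{R}:F(x)\ge u\}$ is its generalized inverse (quantile function). A copula is a bivariate distribution function on $[0,1]^2$ with uniform$(0,1)$ margins. For $0\le u_1\le u_2\le1$, $0\le v_1\le v_2\le 1$, the $C$-volume is $V_C([u_1,u_2]\times[v_1,v_2])=C(u_2,v_2)-C(u_2,v_1)-C(u_1,v_2)+C(u_1,v_1)$. *)

From HB Require Import structures.
From mathcomp Require Import all_boot all_order all_algebra.
From mathcomp Require Import all_classical all_reals all_analysis.
Set Implicit Arguments. Unset Strict Implicit. Unset Printing Implicit Defensive.
Import Order.TTheory GRing.Theory Num.Theory.
Import numFieldNormedType.Exports.
Local Open Scope classical_set_scope.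
Local Open Scope ring_scope.

Section Defs.
Context (R : realType).

Definition ppart (a : R) : R := Num.max a 0.
Definition npart (a : R) : R := 1 - ppart (1 - a).

(* generalized inverse F^{-1}(u) = inf {x in R : F x >= u}, in the extended reals
   (it is -oo for u = 0 and may be +oo for u = 1) *)
Definition qinv (F : R -> R) (u : R) : \bar R :=
  ereal_inf [set x%:E | x in [set x : R | u <= F x]].

Definition Cvol (C : R -> R -> R) (u1 u2 v1 v2 : R) : R :=
  C u2 v2 - C u2 v1 - C u1 v2 + C u1 v1.

Definition is_copula (C : R -> R -> R) : Prop :=
  (forall u, 0 <= u <= 1 -> [/\ C u 0 = 0, C 0 u = 0, C u 1 = u & C 1 u = u]) /\
  (forall u1 u2 v1 v2, 0 <= u1 -> u1 <= u2 -> u2 <= 1 ->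
     0 <= v1 -> v1 <= v2 -> v2 <= 1 -> 0 <= Cvol C u1 u2 v1 v2).

Context (d : measure_display) (T : measurableType d) (P : probability T R).

Definition distrfun (X : T -> R) (x : R) : R := fine (P [set w | X w <= x]).
Definition joint_distrfun (X Y : T -> R) (x y : R) : R :=
  fine (P [set w | X w <= x /\ Y w <= y]).

Definition condprobE (A B : set T) : R := fine (P (A `&` B)) / fine (P B).

Definition qband (X : T -> R) (F : R -> R) (a b : R) : set T :=
  [set w | (qinv F a < (X w)%:E)%E /\ ((X w)%:E <= qinv F b)%E].

End Defs.

From HB Require Import structures.
From mathcomp Require Import all_boot all_order all_algebra.
From mathcomp Require Import all_classical all_reals all_analysis.
From mathcomp Require Import lra.
Set Implicit Arguments. Unset Strict Implicit. Unset Printing Implicit Defensive.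
Import Order.TTheory GRing.Theory Num.Theory.
Import numFieldNormedType.Exports.
Local Open Scope classical_set_scope.
Local Open Scope ring_scope.

(* Because F is continuous, F (F^{-1} u) = u for u in [0,1] (F^{-1} u may be
   -oo or +oo at the ends), so {X <= F^{-1} u} has probability u and, by
   H = C (F, G), {X <= F^{-1} u, Y <= G^{-1} v} has probability C u v. The bands
   are differences of such events, so for every t > 0 the conditional
   probabilities equal the C-volume divided by the band width exactly, and the
   two limits coincide. *)

Lemma ppart_npart_bounds (R : realType) (p t : R) : 0 <= p <= 1 -> 0 <= t ->
  [/\ 0 <= ppart (p - t), ppart (p - t) <= npart (p + t) & npart (p + t) <= 1].
Proof.
move=> /andP[p0 p1] t0; rewrite /npart /ppart !maxEle.
by case: (leP (p - t) 0); case: (leP (1 - (p + t)) 0); split; lra.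
Qed.

Lemma near_eq_cvgE {T} {U : topologicalType} {F : set_system T} {FF : Filter F}
    (f g : T -> U) (l : U) :
  {near F, f =1 g} -> (f @ F --> l) <-> (g @ F --> l).
Proof.
move=> fg; split=> /(cvg_trans _); apply; apply: near_eq_cvg => //.
by apply: filterS fg => t ->.
Qed.

Section quantile.
Context (R : realType) (F : R -> R).

Lemma qinv_nondecreasing : {homo qinv F : u v / u <= v >-> (u <= v)%E}.
Proof. by move=> u v uv; apply/ereal_inf_le_tmp/image_subset => x /=; exact: le_trans. Qed.

Hypotheses (F_nd : {homo F : x y / x <= y}) (F_cont : continuous F)
  (F_Ny0 : F x @[x --> -oo] --> (0 : R)) (F_y1 : F x @[x --> +oo] --> (1 : R)).

Let F_ge0 x : 0 <= F x.
Proof.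
rewrite leNgt; apply/negP => Fx0.
have : \forall y \near -oo, F x < F y /\ y <= x.
  near=> y; split.
  - by near: y; exact: cvgr_gt _ F_Ny0 _ Fx0.
  - by near: y; exact/nbhs_ninfty_le/num_real.
move=> /filter_ex[y [Fxy yx]].
by have := F_nd yx; rewrite leNgt Fxy.
Unshelve. all: by end_near.
Qed.

Variant qinv_spec (u : R) : \bar R -> Prop :=
  | QinvNy of u = 0 : qinv_spec u -oo
  | QinvPy of u = 1 : qinv_spec u +oo
  | QinvFin m of F m = u : qinv_spec u m%:E.

Lemma qinvP u : 0 <= u <= 1 -> qinv_spec u (qinv F u).
Proof.
move=> /andP[u0 u1]; rewrite /qinv; set S := [set x | u <= F x].
have [ule0|ugt0] := leP u 0.
  have -> : S = setT by apply/seteqP; split=> // x _; exact: le_trans ule0 (F_ge0 x).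
  by rewrite ereal_inf_real; constructor; apply/le_anti; rewrite ule0.
have [S0|/set0P[x0 Sx0]] := eqVneq S set0.
  rewrite S0 image_set0 ereal_inf0; constructor; apply/le_anti; rewrite u1 /= leNgt.
  apply/negP => /(cvgr_gt _ F_y1) /filter_ex[x Fx].
  have Sx : S x := ltW Fx.
  by rewrite S0 in Sx.
have S_lb : has_lbound S.
  have [x1 Fx1] := filter_ex (cvgr_lt _ F_Ny0 _ ugt0).
  exists x1 => x Sx; rewrite leNgt; apply/negP => /ltW/F_nd Fxx1.
  by have := le_lt_trans (le_trans Sx Fxx1) Fx1; rewrite ltxx.
have S_ne : S !=set0 by exists x0.
rewrite ereal_inf_EFin //; apply: QinvFin; set m := inf S.
(* F < u left of m and F >= u right of m; continuity at m gives F m = u. *)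
apply/le_anti/andP; split.
- apply: cvgr_to_le (cvg_at_left_filter (@F_cont m)) _.
  near=> x; have xm : x < m by near: x; exact: nbhs_left_lt.
  rewrite leNgt; apply/negP => Fxu.
  by have := ge_inf S_lb (ltW Fxu); rewrite leNgt xm.
- apply: cvgr_to_ge (cvg_at_right_filter (@F_cont m)) _.
  near=> x; have mx : m < x by near: x; exact: nbhs_right_gt.
  have [s Ss sx] := inf_lt S_ne mx.
  exact: le_trans Ss (F_nd (ltW sx)).
Unshelve. all: by end_near.
Qed.

End quantile.

Definition qlevel {d} {T : measurableType d} {R : realType}
  (X : T -> R) (F : R -> R) (u : R) : set T := [set w | ((X w)%:E <= qinv F u)%E].

Lemma qbandE {d} {T : measurableType d} {R : realType} (X : T -> R) F (a b : R) :
  qband X F a b = qlevel X F b `\` qlevel X F a.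
Proof.
apply/seteqP; split=> w /= [aX Xb]; split=> //.
- by apply/negP; rewrite -ltNge.
- by rewrite ltNge; apply/negP.
Qed.

Lemma qlevel_subset {d} {T : measurableType d} {R : realType} (X : T -> R) F (a b : R) :
  a <= b -> qlevel X F a `<=` qlevel X F b.
Proof. by move=> ab w /= /le_trans; apply; exact: qinv_nondecreasing. Qed.

Section finite_measure.
Context d (T : measurableType d) (R : realType) (mu : {finite_measure set T -> \bar R}).

Lemma fine_measureD (A B : set T) : measurable A -> measurable B ->
  fine (mu (A `\` B)) = fine (mu A) - fine (mu (A `&` B)).
Proof.
move=> mA mB; have mAB := measurableI _ _ mA mB.
by rewrite measureD ?fineB ?fin_num_measure // ltey_eq fin_num_measure.
Qed.

Lemma fine_measure_rect (A A' B B' : set T) :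
  measurable A -> measurable A' -> measurable B -> measurable B' ->
  A `<=` A' -> B `<=` B' ->
  fine (mu ((A' `\` A) `&` (B' `\` B))) =
  fine (mu (A' `&` B')) - fine (mu (A' `&` B)) - fine (mu (A `&` B')) + fine (mu (A `&` B)).
Proof.
move=> mA mA' mB mB' AA' BB'.
have muID Z : measurable Z ->
    fine (mu (Z `&` (B' `\` B))) = fine (mu (Z `&` B')) - fine (mu (Z `&` B)).
  move=> mZ; rewrite setIDA fine_measureD; last 2 first.
  - exact: measurableI.
  - exact: mB.
  by rewrite -setIA (setIidr BB').
rewrite setIC setIDA fine_measureD; last 2 first.
- by apply: measurableI => //; exact: measurableD.
- exact: mA.
by rewrite -setIA (setIidr AA') ![(B' `\` B) `&` _]setIC !muID //; lra.
Qed.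

End finite_measure.

Section distribution_function.
Context d (T : measurableType d) (R : realType) (P : probability T R) (X : T -> R).
Hypothesis mX : measurable_fun setT X.

Let measurable_X_le m : measurable [set w | X w <= m].
Proof.
rewrite -[X in measurable X]setTI -[X in _ `&` X]/(X @^-1` `]-oo, m]).
exact: mX measurableT _ (measurable_itv _).
Qed.

Let XRV : {RV P >-> R} := mfun_Sub (mem_set mX).

Let distrfun_cdf : distrfun P X = fine \o cdf XRV.
Proof. by []. Qed.

Lemma distrfun_nondecreasing : {homo distrfun P X : x y / x <= y}.
Proof.
by move=> x y xy; rewrite distrfun_cdf fine_le ?fin_num_measure ?cdf_nondecreasing.
Qed.

Lemma distrfun_cvgNy0 : distrfun P X x @[x --> -oo] --> (0 : R).
Proof. by rewrite distrfun_cdf; apply: fine_cvg; exact: cvg_cdfNy0. Qed.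

Lemma distrfun_cvgy1 : distrfun P X x @[x --> +oo] --> (1 : R).
Proof. by rewrite distrfun_cdf; apply: fine_cvg; exact: cvg_cdfy1. Qed.

Hypothesis cF : continuous (distrfun P X).

Variant qlevel_spec (u : R) : set T -> Prop :=
  | QlevelEmpty of u = 0 : qlevel_spec u set0
  | QlevelFull of u = 1 : qlevel_spec u setT
  | QlevelCut m of distrfun P X m = u : qlevel_spec u [set w | X w <= m].

Lemma qlevelP u : 0 <= u <= 1 -> qlevel_spec u (qlevel X (distrfun P X) u).
Proof.
move=> u01; rewrite /qlevel.
case: (qinvP distrfun_nondecreasing cF distrfun_cvgNy0 distrfun_cvgy1 u01).
- move=> u0; have -> : [set w | ((X w)%:E <= -oo)%E] = set0.
    by apply/seteqP; split=> w //=; rewrite leeNy_eq.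
  exact: QlevelEmpty.
- move=> u1; have -> : [set w | ((X w)%:E <= +oo)%E] = setT.
    by apply/seteqP; split=> w //= _; rewrite leey.
  exact: QlevelFull.
- move=> m Fm; have -> : [set w | ((X w)%:E <= m%:E)%E] = [set w | X w <= m].
    by apply/seteqP; split=> w /=; rewrite lee_fin.
  exact: QlevelCut.
Qed.

Lemma measurable_qlevel u : 0 <= u <= 1 -> measurable (qlevel X (distrfun P X) u).
Proof. by case/qlevelP. Qed.

Lemma probability_qlevel u : 0 <= u <= 1 -> fine (P (qlevel X (distrfun P X) u)) = u.
Proof. by case/qlevelP => [->|->|m <-]; rewrite ?measure0 ?probability_setT. Qed.

Lemma probability_qband a b : 0 <= a -> a <= b -> b <= 1 ->
  fine (P (qband X (distrfun P X) a b)) = b - a.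
Proof.
move=> a0 ab b1; have a01 : 0 <= a <= 1 by rewrite a0 (le_trans ab b1).
have b01 : 0 <= b <= 1 by rewrite (le_trans a0 ab) b1.
rewrite qbandE fine_measureD; try exact: measurable_qlevel.
by rewrite (setIidr (qlevel_subset (X:=X) (F:=distrfun P X) ab)) !probability_qlevel.
Qed.

End distribution_function.

Section joint_distribution.
Context d (T : measurableType d) (R : realType) (P : probability T R).
Variables (X Y : T -> R) (C : R -> R -> R).
Hypotheses (mX : measurable_fun setT X) (mY : measurable_fun setT Y).
Hypotheses (cFX : continuous (distrfun P X)) (cFY : continuous (distrfun P Y)).
Hypothesis C_margins : forall u, 0 <= u <= 1 ->
  [/\ C u 0 = 0, C 0 u = 0, C u 1 = u & C 1 u = u].
Hypothesis HC : forall x y,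
  joint_distrfun P X Y x y = C (distrfun P X x) (distrfun P Y y).

Lemma probability_qlevelI u v : 0 <= u <= 1 -> 0 <= v <= 1 ->
  fine (P (qlevel X (distrfun P X) u `&` qlevel Y (distrfun P Y) v)) = C u v.
Proof.
move=> u01 v01; have [Cu0 _ Cu1 _] := C_margins u01.
have [_ C0v _ C1v] := C_margins v01.
case: (qlevelP mX cFX u01) => [u0|u1|m Fm].
- by rewrite set0I measure0 u0 C0v.
- by rewrite setTI u1 C1v probability_qlevel.
- case: (qlevelP mY cFY v01) => [v0|v1|m' Gm'].
  + by rewrite setI0 measure0 v0 Cu0.
  + by rewrite setIT v1 Cu1 -Fm.
  + by rewrite -Fm -Gm' -HC.
Qed.

Lemma probability_qbandI a b c e : 0 <= a -> a <= b -> b <= 1 ->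
  0 <= c -> c <= e -> e <= 1 ->
  fine (P (qband X (distrfun P X) a b `&` qband Y (distrfun P Y) c e)) =
  Cvol C a b c e.
Proof.
move=> a0 ab b1 c0 ce e1.
have a01 : 0 <= a <= 1 by rewrite a0 (le_trans ab b1).
have b01 : 0 <= b <= 1 by rewrite (le_trans a0 ab) b1.
have c01 : 0 <= c <= 1 by rewrite c0 (le_trans ce e1).
have e01 : 0 <= e <= 1 by rewrite (le_trans c0 ce) e1.
rewrite !qbandE fine_measure_rect; try exact: measurable_qlevel.
- by rewrite !probability_qlevelI.
- exact: qlevel_subset.
- exact: qlevel_subset.
Qed.

End joint_distribution.

Theorem proposition1 (d : measure_display) (T : measurableType d) (R : realType)
  (P : probability T R) (X Y : T -> R) (C : R -> R -> R) :
  measurable_fun setT X -> measurable_fun setT Y ->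
  continuous (distrfun P X) -> continuous (distrfun P Y) ->
  is_copula C ->
  (forall x y, joint_distrfun P X Y x y = C (distrfun P X x) (distrfun P Y y)) ->
  forall p q : R, 0 <= p <= 1 -> 0 <= q <= 1 ->
  let F := distrfun P X in let G := distrfun P Y in
  let EX t := qband X F (ppart (p - t)) (npart (p + t)) in
  let EY t := qband Y G (ppart (q - t)) (npart (q + t)) in
  let V t := Cvol C (ppart (p - t)) (npart (p + t)) (ppart (q - t)) (npart (q + t)) in
  forall l : R,
  ((condprobE P (EY t) (EX t) @[t --> 0^'+] --> l) <->
     (V t / (npart (p + t) - ppart (p - t)) @[t --> 0^'+] --> l)) /\
  ((condprobE P (EX t) (EY t) @[t --> 0^'+] --> l) <->
     (V t / (npart (q + t) - ppart (q - t)) @[t --> 0^'+] --> l)).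
Proof.
move=> mX mY cFX cFY [C_margins _] HC p q p01 q01 F G EX EY V l.
have condprob_ratios t : 0 < t ->
    condprobE P (EY t) (EX t) = V t / (npart (p + t) - ppart (p - t)) /\
    condprobE P (EX t) (EY t) = V t / (npart (q + t) - ppart (q - t)).
  move=> /ltW t0; have [a0 ab b1] := ppart_npart_bounds p01 t0.
  have [c0 ce e1] := ppart_npart_bounds q01 t0.
  rewrite /condprobE /EX /EY (probability_qband mX cFX) // (probability_qband mY cFY) //.
  by rewrite setIC (probability_qbandI mX mY cFX cFY C_margins HC).
by split; apply: near_eq_cvgE; apply: filterS (nbhs_right_gt 0) => t /condprob_ratios[].
Qed.
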